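(* Let $\varphi$ be a toric plurisubharmonic function on $D(0,1)\subseteq\mathbf{C}^n$ such that near $0$, $\varphi=\frac{c}{2}\log\left(|z^{b_1}|^2+\cdots+|z^{b_r}|^2\right)+O(1)$ with $c>0$ and multi-indices $b_1,\dots,b_r$. Let $P(b)$ denote the convex hull of $\{b_1,\dots,b_r\}$. Then the Newton convex body of $\varphi$ is $P(\varphi)=c\,P(b)+\mathbf{R}^n_{\ge0}$.
   Context: A psh function on $D(0,1)$ is toric if it is invariant under $(z_j)\mapsto(e^{i\theta_j}z_j)$ for all real $\theta_j$; then there is a convex function $g$ on $U=(-\infty,0)^n$, increasing in each variable, with $\varphi(z)=g(\log|z_1|,\dots,\log|z_n|)$. The Newton convex body is $P(\varphi)=\{x\in\mathbf{R}^n:\sup_{y\in U}(\langle x,y\rangle-g(y))<+\infty\}$. $z^b=z_1^{b^{(1)}}\cdots z_n^{b^{(n)}}$; the sum $cP(b)+\mathbf{R}^n_{\ge0}$ is a Minkowski sum. *)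

From HB Require Import structures.
From mathcomp Require Import all_boot all_order all_algebra.
From mathcomp Require Import all_classical all_reals all_analysis.
Set Implicit Arguments. Unset Strict Implicit. Unset Printing Implicit Defensive.
Import Order.TTheory GRing.Theory Num.Theory.
Local Open Scope ring_scope.
Local Open Scope classical_set_scope.

Definition dotR {R : realType} {n : nat} (x y : 'I_n -> R) : R :=
  \sum_(i < n) x i * y i.

Definition negOrthant {R : realType} {n : nat} : set ('I_n -> R) :=
  [set y | forall i, y i < 0].

Definition convex_on_U {R : realType} {n : nat} (g : ('I_n -> R) -> R) : Prop :=
  forall y1 y2 : 'I_n -> R, negOrthant y1 -> negOrthant y2 ->
  forall t : R, 0 <= t <= 1 ->
    g (fun i => t * y1 i + (1 - t) * y2 i) <= t * g y1 + (1 - t) * g y2.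

Definition increasing_each_var {R : realType} {n : nat}
  (g : ('I_n -> R) -> R) : Prop :=
  forall (y : 'I_n -> R) (i : 'I_n) (s : R), negOrthant y ->
    y i <= s -> s < 0 -> g y <= g (fun j => if j == i then s else y j).

(* toric psh function on D(0,1), via its convex representative g:
   phi(z) = g(log|z_1|, ..., log|z_n|) *)
Definition toric_psh_rep {R : realType} {n : nat} (g : ('I_n -> R) -> R) : Prop :=
  convex_on_U g /\ increasing_each_var g.

Definition newton_body {R : realType} {n : nat} (g : ('I_n -> R) -> R)
  : set ('I_n -> R) :=
  [set x | exists M : R, forall y, negOrthant y -> dotR x y - g y <= M].

Definition natvec {R : realType} {n : nat} (b : 'I_n -> nat) : 'I_n -> R :=
  fun i => (b i)%:R.

(* log|z^b| = <b, y>  when y = (log|z_i|)_i *)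

Definition conv_hull_nat {R : realType} {n r : nat} (b : 'I_r -> 'I_n -> nat)
  : set ('I_n -> R) :=
  [set p | exists w : 'I_r -> R, (forall j, 0 <= w j) /\ \sum_(j < r) w j = 1 /\
     p = (fun i => \sum_(j < r) w j * (b j i)%:R)].

Definition scaled_hull_plus_orthant {R : realType} {n r : nat} (c : R)
  (b : 'I_r -> 'I_n -> nat) : set ('I_n -> R) :=
  [set x | exists p q : 'I_n -> R, conv_hull_nat b p /\ (forall i, 0 <= q i) /\
     x = (fun i => c * p i + q i)].

(* phi = (c/2) log(|z^{b_1}|^2 + ... + |z^{b_r}|^2) + O(1) near 0,
   written on the torus part via y = (log|z_i|)_i: for all y with every
   coordinate below some threshold a (i.e. |z_i| < e^a). *)
Definition near0_log_sing {R : realType} {n r : nat} (g : ('I_n -> R) -> R)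
  (c : R) (b : 'I_r -> 'I_n -> nat) : Prop :=
  exists (a M : R), a < 0 /\ forall y : 'I_n -> R, (forall i, y i < a) ->
    `| g y - c / 2 * ln (\sum_(j < r) expR (2 * dotR (natvec (b j)) y)) | <= M.

(* As the log of a sum of r exponentials is
   their largest exponent up to ln r, the hypothesis says that
   g(y) = c max_j <b_j, y> + O(1) deep in the negative orthant.  If x = c p + q
   with p in P(b) and q >= 0, then <x, y> <= c max_j <b_j, y> <= g(y) + O(1)
   there, and monotonicity of g reaches every y < 0 at the cost of a term
   linear in c p.  Conversely, if <x, y> - g(y) is bounded, evaluating at T y
   for large T gives <x, y> <= c max_j <b_j, y> for every y < 0.  A Farkas-type
   argument turns this into x in c P(b) + R^n_{>=0}: minimise over the simplex
   the squared distance from x - c (sum_j w_j b_j) to the nonnegative orthant;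
   at a minimiser outside the orthant, the first-order conditions produce a
   direction y < 0 with <x, y> > c max_j <b_j, y>. *)

From HB Require Import structures.
From mathcomp Require Import all_boot all_order all_algebra.
From mathcomp Require Import all_classical all_reals all_analysis.
From mathcomp Require Import ring lra.
Import Order.TTheory GRing.Theory Num.Theory.
Import numFieldTopology.Exports numFieldNormedType.Exports.
Local Open Scope ring_scope.
Local Open Scope classical_set_scope.
Set Implicit Arguments.
Unset Strict Implicit.
Unset Printing Implicit Defensive.

Section RealFacts.
Variable R : realType.
Implicit Types s t u v A C K : R.

Lemma mul_min0 s : s * Num.min s 0 = Num.min s 0 ^+ 2.
Proof. by have [hs|hs] := lerP s 0; rewrite ?(min_l hs) ?(min_r (ltW hs)); nra. Qed.

(* [s |-> min(s, 0)^2] has the 2-Lipschitz derivative [s |-> 2 min(s, 0)]. *)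
Lemma sqr_min0_subr_le s t u :
  Num.min (s - t * u) 0 ^+ 2 <=
  Num.min s 0 ^+ 2 - 2 * t * u * Num.min s 0 + t ^+ 2 * u ^+ 2.
Proof.
have [hs|hs] := lerP s 0; have [ha|ha] := lerP (s - t * u) 0;
  rewrite ?(min_l hs) ?(min_l ha) ?(min_r (ltW hs)) ?(min_r (ltW ha)); nra.
Qed.

Lemma le0_of_small_quadratic_bound A C : 0 <= C ->
  (forall t, 0 < t -> t < 1 -> 2 * t * A <= t ^+ 2 * C) -> A <= 0.
Proof.
move=> C0 hAC; rewrite leNgt; apply/negP => A0.
have D0 : 0 < A + C + 1 by lra.
pose t := A / (A + C + 1).
have tD : t * (A + C + 1) = A by rewrite /t; field; lra.
have t0 : 0 < t by rewrite divr_gt0.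
have t1 : t < 1 by rewrite ltr_pdivrMr //; lra.
have := hAC t t0 t1; nra.
Qed.

Lemma le_of_linear_bound u v K (T0 : R) : 0 < T0 ->
  (forall T, T0 <= T -> T * u <= T * v + K) -> u <= v.
Proof.
move=> T00 huv; rewrite leNgt; apply/negP => vu.
have d0 : 0 < u - v by rewrite subr_gt0.
pose T := T0 + `|K| / (u - v).
have T0T : T0 <= T by rewrite lerDl divr_ge0 // ltW.
have hT : T * (u - v) = T0 * (u - v) + `|K| by rewrite /T; field; rewrite gt_eqF.
have := huv T T0T; have := ler_norm K; have := mulr_gt0 T00 d0.
nra.
Qed.

End RealFacts.

Section LogSumExp.
Variables (R : realType) (r : nat).
Implicit Types u : 'I_r -> R.

Lemma expR_le_sum u j : expR (u j) <= \sum_(k < r) expR (u k).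
Proof. by rewrite (bigD1 j) //= lerDl sumr_ge0 // => k _; exact: ltW (expR_gt0 _). Qed.

Lemma sum_expR_gt0 u (j : 'I_r) : 0 < \sum_(k < r) expR (u k).
Proof. exact: lt_le_trans (expR_gt0 _) (expR_le_sum u j). Qed.

Lemma le_ln_sum_expR u j : u j <= ln (\sum_(k < r) expR (u k)).
Proof.
by rewrite -[leLHS]expRK ler_ln ?posrE ?expR_gt0 ?(sum_expR_gt0 _ j) ?expR_le_sum.
Qed.

Lemma ln_sum_expR_le u m : (0 < r)%N -> (forall j, u j <= m) ->
  ln (\sum_(k < r) expR (u k)) <= ln r%:R + m.
Proof.
move=> r0 hum.
have hum' k : expR (u k) <= expR m by rewrite ler_expR.
have r0R : 0 < (r%:R : R) by rewrite ltr0n.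
have hsum : \sum_(k < r) expR (u k) <= r%:R * expR m.
  apply: (le_trans (ler_sum _ (fun k _ => hum' k))).
  by rewrite sumr_const card_ord mulr_natl.
by rewrite -[m in _ + m]expRK -lnM ?posrE ?expR_gt0 // ler_ln ?posrE
  ?mulr_gt0 ?expR_gt0 // (sum_expR_gt0 _ (Ordinal r0)).
Qed.

End LogSumExp.

Section Dot.
Variables (R : realType) (n : nat).
Implicit Types v w y : 'I_n -> R.

Lemma dotZl t v y : dotR (fun i => t * v i) y = t * dotR v y.
Proof. by rewrite /dotR mulr_sumr; apply: eq_bigr => i _; rewrite mulrA. Qed.

Lemma dotZr t v y : dotR v (fun i => t * y i) = t * dotR v y.
Proof. by rewrite /dotR mulr_sumr; apply: eq_bigr => i _; rewrite mulrCA. Qed.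

Lemma dotDl v w y : dotR (fun i => v i + w i) y = dotR v y + dotR w y.
Proof. by rewrite /dotR -big_split; apply: eq_bigr => i _; rewrite mulrDl. Qed.

Lemma dot_le0 v y : (forall i, 0 <= v i) -> negOrthant y -> dotR v y <= 0.
Proof. by move=> v0 y0; apply: sumr_le0 => i _; rewrite mulr_ge0_le0 // ltW. Qed.

Lemma dot_le_truncate v y s : (forall i, 0 <= v i) -> negOrthant y ->
  dotR v y <= dotR v (fun i => Num.min (y i) s) + `|s| * \sum_(i < n) v i.
Proof.
move=> v0 y0; rewrite /dotR mulr_sumr -big_split ler_sum // => i _ /=.
have yi : y i <= Num.min (y i) s + `|s|.
  have := y0 i; have := normr_ge0 s; have := ler_norm (- s); rewrite normrN.
  by have [ys|sy] := lerP (y i) s; rewrite ?(min_l ys) ?(min_r (ltW sy)); lra.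
by rewrite [`|s| * _]mulrC -mulrDr ler_wpM2l.
Qed.

End Dot.

Section Simplex.
Variables (R : realType) (r : nat).
Implicit Types w v : 'I_r -> R.

Definition simplex : set ('I_r -> R) :=
  [set w | (forall j, 0 <= w j) /\ \sum_(j < r) w j = 1].

Lemma simplex_le1 w j : simplex w -> w j <= 1.
Proof. by move=> [w0 <-]; rewrite (bigD1 j) //= lerDl sumr_ge0. Qed.

Lemma simplex_delta j : simplex (fun k => (k == j)%:R).
Proof.
split=> [k|]; first exact: ler0n.
by rewrite (bigD1 j) //= eqxx big1 ?addr0 // => k /negbTE ->.
Qed.

Lemma simplex_convex w v t : simplex w -> simplex v -> 0 <= t <= 1 ->
  simplex (fun k => (1 - t) * w k + t * v k).
Proof.
move=> [w0 w1] [v0 v1] /andP[t0 t1]; split=> [k|].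
  by rewrite addr_ge0 ?mulr_ge0 ?subr_ge0.
by rewrite big_split /= -!mulr_sumr w1 v1; ring.
Qed.

Lemma simplex_rV_compact : compact [set w : 'rV[R]_r | simplex (fun j => w ord0 j)].
Proof.
have -> : [set w : 'rV[R]_r | simplex (fun j => w ord0 j)] =
    [set w | forall j, `[0, 1] (w ord0 j)] `&` [set w | \sum_(j < r) w ord0 j = 1].
  apply/seteqP; split=> w.
    move=> hw; split=> [j|]; last by case: hw.
    by rewrite /= in_itv /= (proj1 hw) (simplex_le1 _ hw).
  by move=> [/= w01 w1]; split=> // j; have /andP[] := w01 j.
apply: compact_closedI.
  by apply: (@rV_compact R r (fun=> `[0, 1]%classic)) => j; exact: segment_compact.
have sum_cont : continuous (fun w : 'rV[R]_r => \sum_(j < r) w ord0 j).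
  by apply: (@continuous_big R _ +%R 0 predT add_continuous) => j _;
    exact: coord_continuous.
exact: (proj1 (continuous_closedP _) sum_cont _ (@closed_eq R 1)).
Qed.

Lemma simplex_combo_le w (a : 'I_r -> R) s :
  simplex w -> (forall j, a j <= s) -> \sum_(j < r) w j * a j <= s.
Proof.
move=> [w0 w1] a_le; rewrite -[leRHS]mul1r -w1 mulr_suml.
by apply: ler_sum => j _; rewrite ler_wpM2l.
Qed.

End Simplex.

Section OrthantResidual.
Variables (R : realType) (n r : nat) (B : 'I_r -> 'I_n -> R) (x : 'I_n -> R).
Implicit Types (w : 'I_r -> R) (p y : 'I_n -> R).

Definition combo w : 'I_n -> R := fun i => \sum_(j < r) w j * B j i.

Definition residual w : R := \sum_(i < n) Num.min (x i - combo w i) 0 ^+ 2.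

Lemma residual_rV_continuous :
  continuous (fun w : 'rV[R]_r => residual (fun j => w ord0 j)).
Proof.
apply: (@continuous_big R _ +%R 0 predT add_continuous) => i _.
have combo_cont : continuous (fun w : 'rV[R]_r => combo (fun j => w ord0 j) i).
  apply: (@continuous_big R _ +%R 0 predT add_continuous) => j _ w.
  by apply: continuousM; [exact: coord_continuous | exact: cst_continuous].
have min_cont :
    continuous (fun w : 'rV[R]_r => Num.min (x i - combo (fun j => w ord0 j) i) 0).
  apply: min_fun_continuous; last exact: cst_continuous.
  by move=> w; apply: (@continuousB R R^o); [exact: cst_continuous | exact: combo_cont].
by move=> w; exact: (continuousM (min_cont w) (min_cont w)).
Qed.

Lemma residual_has_min : (0 < r)%N ->
  exists2 w0, simplex w0 & forall w, simplex w -> residual w0 <= residual w.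
Proof.
move=> r0; have rowK w : (fun j => (\row_k w k) ord0 j) = w.
  by apply: funext => j; rewrite mxE.
have simplex_ne : [set w : 'rV[R]_r | simplex (fun j => w ord0 j)] !=set0.
  by exists (\row_k (k == Ordinal r0)%:R); rewrite /= rowK; exact: simplex_delta.
have [w0 w0S w0min] := compact_EVT_min simplex_ne (@simplex_rV_compact R r)
  (continuous_subspaceT residual_rV_continuous).
exists (fun j => w0 ord0 j) => [|w wS]; first by move: w0S; rewrite inE.
by have := w0min (\row_k w k); rewrite !rowK; apply; rewrite inE /= rowK.
Qed.

Lemma combo_towards w j t i :
  combo (fun k => (1 - t) * w k + t * (k == j)%:R) i =
  combo w i + t * (B j i - combo w i).
Proof.
have delta : \sum_(k < r) (k == j)%:R * B k i = B j i.
  by rewrite (bigD1 j) //= eqxx mul1r big1 ?addr0 // => k /negbTE ->; rewrite mul0r.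
rewrite /combo (eq_bigr (fun k => (1 - t) * (w k * B k i) + t * ((k == j)%:R * B k i))).
  by rewrite big_split /= -!mulr_sumr delta; ring.
by move=> k _; ring.
Qed.

Lemma residual_min_first_order w0 : simplex w0 ->
    (forall w, simplex w -> residual w0 <= residual w) ->
  forall j, \sum_(i < n) Num.min (x i - combo w0 i) 0 * (B j i - combo w0 i) <= 0.
Proof.
move=> w0S w0min j; pose d := fun i => Num.min (x i - combo w0 i) 0.
apply: (le0_of_small_quadratic_bound (C := \sum_(i < n) (B j i - combo w0 i) ^+ 2)).
  by apply: sumr_ge0 => i _; exact: sqr_ge0.
move=> t t0 t1; pose wt k := (1 - t) * w0 k + t * (k == j)%:R.
have wtS : simplex wt.
  by apply: simplex_convex => //; [exact: simplex_delta | rewrite !ltW].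
have term_le i : Num.min (x i - combo wt i) 0 ^+ 2 <=
    d i ^+ 2 - 2 * t * (B j i - combo w0 i) * d i + t ^+ 2 * (B j i - combo w0 i) ^+ 2.
  by rewrite combo_towards opprD addrA; exact: sqr_min0_subr_le.
have := le_trans (w0min _ wtS) (ler_sum _ (fun i _ => term_le i)).
rewrite !big_split /= sumrN -mulr_sumr.
have -> : \sum_(i < n) 2 * t * (B j i - combo w0 i) * d i =
    2 * t * \sum_(i < n) d i * (B j i - combo w0 i).
  by rewrite mulr_sumr; apply: eq_bigr => i _; ring.
by rewrite /residual -/d; lra.
Qed.

(* If some [p i > x i], then [y := min(x - p, 0) - eps] has [<x, y> > <B j, y>]
   for every j. *)
Lemma dominated_first_order_le p :
    (forall j, \sum_(i < n) Num.min (x i - p i) 0 * (B j i - p i) <= 0) ->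
    (forall y, negOrthant y -> exists j, dotR x y <= dotR (B j) y) ->
  forall i, p i <= x i.
Proof.
move=> first_order dominated i0; rewrite leNgt; apply/negP => xp.
pose d i := Num.min (x i - p i) 0.
have d_le0 i : d i <= 0 by rewrite ge_min lexx orbT.
pose L := \sum_(j < r) \sum_(i < n) `|x i - B j i|.
have L0 : 0 <= L by do 2!apply: sumr_ge0 => ? _.
pose delta := (x i0 - p i0) ^+ 2.
have delta0 : 0 < delta by rewrite exprn_even_gt0 //= subr_eq0 lt_eqF.
pose eps := delta / (2 * (L + 1)).
have eps0 : 0 < eps by rewrite divr_gt0 //; lra.
have epsL : eps * L <= delta / 2.
  have : eps * (2 * (L + 1)) = delta by rewrite /eps; field; lra.
  nra.
pose y i := d i - eps.
have [j hj] : exists j, dotR x y <= dotR (B j) y.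
  by apply: dominated => i; have := d_le0 i; rewrite /y; lra.
have dot_diff : dotR x y - dotR (B j) y = \sum_(i < n) (x i - p i) * d i
    - \sum_(i < n) d i * (B j i - p i) - eps * \sum_(i < n) (x i - B j i).
  by rewrite /dotR mulr_sumr -!sumrB; apply: eq_bigr => i _; rewrite /y; ring.
have delta_le : delta <= \sum_(i < n) (x i - p i) * d i.
  rewrite (eq_bigr (fun i => d i ^+ 2)) => [|i _]; last exact: mul_min0.
  rewrite (bigD1 i0) //= [d i0]min_l; last by rewrite subr_le0 ltW.
  by rewrite lerDl sumr_ge0 // => i _; exact: sqr_ge0.
have sum_le : \sum_(i < n) (x i - B j i) <= L.
  apply: le_trans (ler_sum _ (fun i _ => ler_norm (x i - B j i))) _.
  by rewrite /L (bigD1 j) //= lerDl; do 2!apply: sumr_ge0 => ? _.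
have := ler_wpM2l (ltW eps0) sum_le; have := first_order j.
lra.
Qed.

Lemma exists_simplex_combo_le : (0 < r)%N ->
    (forall y, negOrthant y -> exists j, dotR x y <= dotR (B j) y) ->
  exists2 w, simplex w & forall i, combo w i <= x i.
Proof.
move=> r0 dominated; have [w0 w0S w0min] := residual_has_min r0.
exists w0 => //; apply: dominated_first_order_le dominated.
exact: residual_min_first_order.
Qed.

End OrthantResidual.

Lemma increasing_each_var_le (R : realType) n (g : ('I_n -> R) -> R) :
  increasing_each_var g ->
  forall y y', negOrthant y -> (forall i, y' i <= y i) -> g y' <= g y.
Proof.
move=> g_incr y y' y0 y'y.
pose z (k : nat) (i : 'I_n) := if (i < k)%N then y i else y' i.
have z0 k : negOrthant (z k).
  by move=> i; rewrite /z; case: ifP => // _; exact: le_lt_trans (y'y i) (y0 i).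
have zS k (kn : (k < n)%N) :
    z k.+1 = fun i => if i == Ordinal kn then y (Ordinal kn) else z k i.
  apply: funext => i; rewrite /z ltnS leq_eqVlt.
  have [->|ne] := eqVneq i (Ordinal kn); first by rewrite eqxx.
  by move: ne; rewrite -val_eqE /= => /negbTE ->.
suff : forall k, g y' <= g (z k).
  by move/(_ n); congr (_ <= g _); apply: funext => i; rewrite /z ltn_ord.
elim=> [|k IHk].
  by rewrite (_ : z 0%N = y') //; apply: funext => i; rewrite /z ltn0.
have [kn|nk] := ltnP k n.
  rewrite zS; apply: le_trans IHk (g_incr _ _ _ (z0 k) _ (y0 _)).
  by rewrite /z ltnn.
congr (_ <= g _): IHk; apply: funext => i; rewrite /z ltnS.
by rewrite (leq_trans (ltn_ord i) nk) (leq_trans (ltnW (ltn_ord i)) nk).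
Qed.

Lemma scale_below (R : realType) n (a : R) (y : 'I_n -> R) : negOrthant y ->
  exists2 T0 : R, 0 < T0 & forall T, T0 <= T -> forall i, T * y i < a.
Proof.
move=> y0; exists (1 + \sum_(k < n) `|a / y k|) => [|T T0T i].
  by rewrite ltr_pwDl // sumr_ge0.
have aT : a / y i < T.
  apply: le_lt_trans (ler_norm _) (lt_le_trans _ T0T).
  by rewrite (bigD1 i) //= ltr_pwDl // lerDl sumr_ge0.
by rewrite -ltr_ndivrMr ?y0.
Qed.

Section LogModel.
Variables (R : realType) (n r : nat) (c : R) (b : 'I_r -> 'I_n -> nat).
Hypothesis c0 : 0 <= c.
Implicit Types (x p y : 'I_n -> R) (g : ('I_n -> R) -> R).

Definition log_model y : R :=
  c / 2 * ln (\sum_(j < r) expR (2 * dotR (natvec (b j)) y)).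

Lemma log_model_le y m : (0 < r)%N -> (forall j, dotR (natvec (b j)) y <= m) ->
  log_model y <= c / 2 * ln r%:R + c * m.
Proof.
move=> r0 le_m; have c2 : 0 <= c / 2 by rewrite divr_ge0.
have := ln_sum_expR_le (u := fun j => 2 * dotR (natvec (b j)) y) (m := 2 * m) r0.
move=> /(_ (fun j => ler_wpM2l (ler0n R 2) (le_m j)))/(ler_wpM2l c2).
by rewrite -/(log_model y) => /le_trans; apply; rewrite mulrDr; lra.
Qed.

Lemma dot_hull_le_log_model p y : conv_hull_nat b p -> c * dotR p y <= log_model y.
Proof.
move=> [w [w0 [w1 ->]]].
rewrite /log_model -mulrA [_^-1 * _]mulrC ler_wpM2l //.
have -> : dotR (fun i => \sum_(j < r) w j * (b j i)%:R) y =
    \sum_(j < r) w j * dotR (natvec (b j)) y.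
  rewrite /dotR; under eq_bigr do rewrite mulr_suml.
  rewrite exchange_big; apply: eq_bigr => j _; rewrite mulr_sumr.
  by apply: eq_bigr => i _; rewrite mulrA.
apply: simplex_combo_le (conj w0 w1) _ => j; rewrite ler_pdivlMr // mulrC.
exact: (le_ln_sum_expR (fun k => 2 * dotR (natvec (b k)) y)).
Qed.

Lemma newton_body_dominated g a M0 x : (0 < r)%N ->
    (forall y, (forall i, y i < a) -> g y <= log_model y + M0) ->
    newton_body g x ->
  forall y, negOrthant y -> exists j, dotR x y <= c * dotR (natvec (b j)) y.
Proof.
move=> r0 g_le [M xM] y y0.
have [j _ jmax] := @arg_maxP _ _ _ (Ordinal r0) predT
  (fun j => dotR (natvec (b j)) y) isT.
exists j; have [T0 T0_gt0 T0_below] := scale_below a y0.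
apply: (le_of_linear_bound (K := M + M0 + c / 2 * ln r%:R) T0_gt0) => T T0T.
have T_gt0 : 0 < T := lt_le_trans T0_gt0 T0T.
have Ty0 : negOrthant (fun i => T * y i) by move=> i; rewrite pmulr_rlt0 ?y0.
have Tb k : dotR (natvec (b k)) (fun i => T * y i) <= T * dotR (natvec (b j)) y.
  by rewrite dotZr ler_pM2l //; exact: jmax.
have := log_model_le r0 Tb.
have := xM _ Ty0; have := g_le _ (T0_below T T0T).
rewrite dotZr; lra.
Qed.

Lemma hull_orthant_sub_newton_body g a M0 : increasing_each_var g ->
    (forall y, (forall i, y i < a) -> log_model y - M0 <= g y) ->
  scaled_hull_plus_orthant c b `<=` newton_body g.
Proof.
move=> g_incr g_ge _ [p [q [p_hull [q0 ->]]]].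
have cp0 i : 0 <= c * p i.
  case: p_hull => w [w0 [_ ->]].
  by rewrite mulr_ge0 // sumr_ge0 // => j _; rewrite mulr_ge0.
exists (M0 + `|a - 1| * \sum_(i < n) c * p i) => y y0.
pose y' i := Num.min (y i) (a - 1).
have y'a i : y' i < a by rewrite gt_min; apply/orP; right; lra.
have y'y i : y' i <= y i by rewrite ge_min lexx.
rewrite dotDl dotZl.
have := dot_le_truncate (a - 1) cp0 y0; rewrite -/y' !dotZl.
have := dot_hull_le_log_model y' p_hull; have := g_ge y' y'a.
have := increasing_each_var_le g_incr y0 y'y; have := dot_le0 q0 y0.
lra.
Qed.

Lemma scaled_hull_plus_orthant_of_dominated x : (0 < r)%N ->
    (forall y, negOrthant y -> exists j, dotR x y <= c * dotR (natvec (b j)) y) ->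
  scaled_hull_plus_orthant c b x.
Proof.
move=> r0 dominated.
pose B j i := c * natvec (b j) i.
have [w wS combo_le] : exists2 w, simplex w & forall i, combo B w i <= x i.
  apply: exists_simplex_combo_le r0 _ => y /dominated [j le_j].
  by exists j; rewrite dotZl.
pose p i := \sum_(j < r) w j * (b j i)%:R.
have combo_p i : combo B w i = c * p i.
  by rewrite /combo mulr_sumr; apply: eq_bigr => j _; rewrite /B /natvec mulrCA.
exists p, (fun i => x i - c * p i); split; first by exists w; case: wS.
split=> [i|]; first by rewrite subr_ge0 -combo_p.
by apply: funext => i; rewrite addrC subrK.
Qed.

End LogModel.

Theorem proposition3p5 (R : realType) (n r : nat) (g : ('I_n -> R) -> R)
  (c : R) (b : 'I_r -> 'I_n -> nat) :
  toric_psh_rep g -> (0 < r)%N -> 0 < c -> near0_log_sing g c b ->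
  newton_body g = scaled_hull_plus_orthant c b.
Proof.
move=> [_ g_incr] r0 c0 [a [M0 [_ near0]]].
have g_le y : (forall i, y i < a) -> g y <= log_model c b y + M0.
  by move/near0; rewrite ler_norml => /andP[_]; rewrite /log_model; lra.
have g_ge y : (forall i, y i < a) -> log_model c b y - M0 <= g y.
  by move/near0; rewrite ler_norml => /andP[+ _]; rewrite /log_model; lra.
apply/seteqP; split=> x.
  move=> x_body; apply: (scaled_hull_plus_orthant_of_dominated r0).
  exact: (newton_body_dominated (ltW c0) r0 g_le x_body).
exact: (hull_orthant_sub_newton_body (ltW c0) g_incr g_ge).
Qed.
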